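(* Let $D$ be an arc-colored digraph of order $4$. If $a(D)+c(D)=18$ and $D$ contains no rainbow triangle, then $D\cong\overleftrightarrow{K}_{4}$.
   Context: Digraphs are finite, without loops or multiple arcs (opposite arcs allowed); $\overleftrightarrow{K}_{4}$ is the complete digraph on 4 vertices (12 arcs). $a(D)$ is the number of arcs, $c(D)$ the number of distinct colors under an arc-coloring $C:A(D)\to\mathbb{N}$. A rainbow triangle is a directed 3-cycle with pairwise distinct arc colors. *)

From mathcomp Require Import all_boot.
Set Implicit Arguments. Unset Strict Implicit. Unset Printing Implicit Defensive.

(* A digraph on a finite vertex type V is a loopless arc relation A : rel V
   (opposite arcs allowed, no multiple arcs since A is a relation). *)
Definition loopless (V : finType) (A : rel V) : Prop := forall v, ~~ A v v.

Definition arcs (V : finType) (A : rel V) : {set V * V} :=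
  [set p | A p.1 p.2].

Definition num_arcs (V : finType) (A : rel V) : nat := #|arcs A|.

(* c(D) : number of distinct colors used on arcs; an arc-coloring is
   C : V -> V -> nat, whose values on non-arcs are irrelevant. *)
Definition num_colors (V : finType) (A : rel V) (C : V -> V -> nat) : nat :=
  size (undup [seq C p.1 p.2 | p <- enum (arcs A)]).

Definition has_rainbow_triangle (V : finType) (A : rel V) (C : V -> V -> nat)
  : Prop :=
  exists x y z : V,
    [/\ A x y, A y z, A z x,
        [/\ x != y, y != z & z != x] &
        [/\ C x y != C y z, C y z != C z x & C z x != C x y]].

Definition K4_arcs : rel 'I_4 := fun u v => u != v.

Definition digraph_iso (V W : finType) (A : rel V) (B : rel W) : Prop :=
  exists f : V -> W, bijective f /\ forall u v, A u v = B (f u) (f v).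

From mathcomp Require Import all_boot.

Set Implicit Arguments. Unset Strict Implicit. Unset Printing Implicit Defensive.

(* Relabel the vertices as 'I_4.  If D is not complete, its arc set is one of
   the 2^12 - 1 proper subsets of the arcs of the complete digraph.  A directed
   triangle that is not rainbow has two consecutive arcs of equal color, so for
   some choice of one such pair per triangle of D, c(D) is at most the number
   of classes of the equivalence on arcs generated by the chosen pairs.  A
   computation shows that a(D) plus this number of classes is below 18 for
   every proper arc set and every choice. *)

Section Relabelling.

Variables (V W : finType) (g : W -> V) (A : rel V) (C : V -> V -> nat).
Hypothesis g_bij : bijective g.

Let g_inj : injective g := bij_inj g_bij.

Lemma perm_enum_arcs_relpre :
  perm_eq (enum (arcs A)) [seq (g p.1, g p.2) | p <- enum (arcs (relpre g A))].
Proof.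
have [g' gK g'K] := g_bij.
apply: uniq_perm; first exact: enum_uniq.
  by rewrite map_inj_uniq ?enum_uniq // => -[? ?] [? ?] [/g_inj-> /g_inj->].
move=> [x y]; rewrite mem_enum inE /=; apply/idP/mapP => [Axy | [[u v]]].
  by exists (g' x, g' y); rewrite ?mem_enum ?inE /= ?g'K.
by rewrite mem_enum inE /= => Auv [-> ->].
Qed.

Lemma num_arcs_relpre : num_arcs (relpre g A) = num_arcs A.
Proof.
by rewrite /num_arcs !cardE (perm_size perm_enum_arcs_relpre) size_map.
Qed.

Lemma num_colors_relpre :
  num_colors (relpre g A) (fun x y => C (g x) (g y)) = num_colors A C.
Proof.
rewrite /num_colors (perm_size (perm_undup (perm_mem
  (perm_map (fun p => C p.1 p.2) perm_enum_arcs_relpre)))).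
by rewrite -map_comp.
Qed.

Lemma rainbow_triangle_relpre :
  has_rainbow_triangle (relpre g A) (fun x y => C (g x) (g y)) ->
  has_rainbow_triangle A C.
Proof.
move=> [x [y [z [Axy Ayz Azx [nxy nyz nzx] colors]]]].
by exists (g x), (g y), (g z); split; rewrite ?(inj_eq g_inj).
Qed.

Lemma digraph_iso_relpre (U : finType) (B : rel U) :
  digraph_iso (relpre g A) B -> digraph_iso A B.
Proof.
have [g' gK g'K] := g_bij.
move=> [f [f_bij Af]]; exists (f \o g'); split.
  exact: bij_comp f_bij (Bijective g'K gK).
by move=> u v; rewrite /= -Af /= !g'K.
Qed.

End Relabelling.

Lemma no_rainbow_triangle_pairs (V : finType) (A : rel V) (C : V -> V -> nat)
    (x y z : V) :
  ~ has_rainbow_triangle A C -> [/\ x != y, y != z & z != x] ->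
  A x y -> A y z -> A z x ->
  [|| C x y == C y z, C y z == C z x | C z x == C x y].
Proof.
move=> norb neq Axy Ayz Azx; apply/negPn/negP => /norP[c1 /norP[c2 c3]].
by apply: norb; exists x, y, z.
Qed.

Section ColorClasses.

Variable T : eqType.

(* [unify r] maps each element to a representative of its class in the
   equivalence generated by the pairs of [r].  The [let]s share the
   representatives computed by earlier merges, which keeps evaluation under
   [vm_compute] linear in [size r] rather than exponential. *)
Definition merge_class (f : T -> T) (p : T * T) : T -> T :=
  let a := f p.1 in let b := f p.2 in
  fun k => let fk := f k in if fk == b then a else fk.

Definition unify (r : seq (T * T)) : T -> T := foldl merge_class id r.

Lemma unify_sound (R : eqType) (c : T -> R) r :
  all (fun p => c p.1 == c p.2) r -> forall k, c (unify r k) = c k.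
Proof.
move=> cr; suff foldl_sound f : (forall k, c (f k) = c k) ->
    forall k, c (foldl merge_class f r k) = c k by apply: foldl_sound.
elim: r f cr => [|p r IHr] //= f /andP[/eqP cp cr] cf; apply: IHr cr _ => k.
rewrite /merge_class; case: eqP => [fkE|_]; last exact: cf.
by rewrite cf cp -(cf p.2) -fkE cf.
Qed.

Lemma size_undup_map (R : eqType) (f : T -> R) s :
  size (undup (map f s)) <= size (undup s).
Proof.
rewrite -(size_map f); apply: uniq_leq_size => [|y]; first exact: undup_uniq.
by rewrite mem_undup => /mapP[x xs ->]; rewrite map_f ?mem_undup.
Qed.

Lemma size_undup_map_unify (R : eqType) (c : T -> R) r s :
  all (fun p => c p.1 == c p.2) r ->
  size (undup (map c s)) <= size (undup (map (unify r) s)).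
Proof.
move=> cr; rewrite -(eq_map (unify_sound cr)) map_comp.
exact: size_undup_map.
Qed.

Definition choices (ls : seq (seq T)) : seq (seq T) :=
  foldr (fun cs acc => [seq p :: r | p <- cs, r <- acc]) [:: [::]] ls.

Lemma choices_all (P : pred T) ls :
  all (has P) ls -> exists2 r, r \in choices ls & all P r.
Proof.
elim: ls => [|cs ls IHls] /=; first by exists [::].
move=> /andP[/hasP[p pcs Pp] /IHls[r rls Pr]].
by exists (p :: r); [apply: allpairs_f | rewrite /= Pp].
Qed.

Fixpoint sublists (s : seq T) : seq (seq T) :=
  if s is x :: s' then [seq x :: r | r <- sublists s'] ++ sublists s'
  else [:: [::]].

Lemma filter_sublists (a : pred T) s : filter a s \in sublists s.
Proof.
elim: s => [|x s IHs] //=; rewrite mem_cat.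
by case: (a x); rewrite ?map_f ?IHs ?orbT.
Qed.

End ColorClasses.

(* [enum 'I_4] does not reduce under [vm_compute], so the vertices used in the
   computation are listed explicitly. *)
Definition vertices4 : seq 'I_4 :=
  [:: @Ordinal 4 0 isT; @Ordinal 4 1 isT; @Ordinal 4 2 isT; @Ordinal 4 3 isT].

Lemma mem_vertices4 (i : 'I_4) : i \in vertices4.
Proof.
have enum_ord4 : enum 'I_4 = vertices4.
  by apply: (inj_map val_inj); rewrite val_enum_ord.
by rewrite -enum_ord4 mem_enum.
Qed.

Definition offdiag4 : seq ('I_4 * 'I_4) :=
  [seq p <- [seq (i, j) | i <- vertices4, j <- vertices4] | p.1 != p.2].

Lemma mem_offdiag4 (p : 'I_4 * 'I_4) : (p \in offdiag4) = (p.1 != p.2).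
Proof.
by case: p => i j; rewrite mem_filter andbC (allpairs_f pair) ?mem_vertices4.
Qed.

(* One rotation of each directed triangle suffices, and keeps [choices] small. *)
Definition cyclic_triangles4 : seq ('I_4 * 'I_4 * 'I_4) :=
  [seq t : 'I_4 * 'I_4 * 'I_4 <- [seq (p, z) | p <- offdiag4, z <- vertices4]
     | [&& t.1.1 < t.1.2, t.1.1 < t.2 & t.1.2 != t.2]].

Definition triangle_in (s : seq ('I_4 * 'I_4)) (t : 'I_4 * 'I_4 * 'I_4) :=
  let: (x, y, z) := t in [&& (x, y) \in s, (y, z) \in s & (z, x) \in s].

Definition consecutive_arcs (t : 'I_4 * 'I_4 * 'I_4) :=
  let: (x, y, z) := t in
  [:: ((x, y), (y, z)); ((y, z), (z, x)); ((z, x), (x, y))].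

Definition triangle_constraints (s : seq ('I_4 * 'I_4)) :=
  [seq consecutive_arcs t | t <- cyclic_triangles4 & triangle_in s t].

Definition arcs_color_bound (s : seq ('I_4 * 'I_4)) : bool :=
  (size s == 12) ||
  all (fun r => size s + size (undup (map (unify r) s)) < 18)
      (choices (triangle_constraints s)).

Lemma arcs_color_bound_all : all arcs_color_bound (sublists offdiag4).
Proof. by vm_compute. Qed.

Section DigraphOnI4.

Variables (A : rel 'I_4) (C : 'I_4 -> 'I_4 -> nat).
Hypothesis loopA : loopless A.

Let s := [seq p <- offdiag4 | A p.1 p.2].

Let mem_s (p : 'I_4 * 'I_4) : (p \in s) = A p.1 p.2.
Proof.
rewrite mem_filter mem_offdiag4 andbC; case: p => i j /=.
by case: eqP => // ->; rewrite (negbTE (loopA j)).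
Qed.

Lemma perm_enum_arcs_offdiag4 : perm_eq (enum (arcs A)) s.
Proof.
apply: uniq_perm; rewrite ?enum_uniq ?filter_uniq //.
by move=> p; rewrite mem_enum inE mem_s.
Qed.

Lemma complete_of_size_arcs : size s = 12 -> forall i j, A i j = (i != j).
Proof.
move=> full i j; case: eqVneq => [->|nij]; first exact/negbTE/loopA.
have /allP/(_ (i, j)) : all (fun p => A p.1 p.2) offdiag4.
  by rewrite all_count -size_filter full.
by rewrite mem_offdiag4 => /(_ nij).
Qed.

Lemma triangle_constraints_color :
  ~ has_rainbow_triangle A C ->
  exists2 r, r \in choices (triangle_constraints s) &
             all (fun p => C p.1.1 p.1.2 == C p.2.1 p.2.2) r.
Proof.
move=> norb; apply: choices_all; apply/allP => cs /mapP[[[x y] z]].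
rewrite !mem_filter => /andP[/and3P[Axy Ayz Azx] /andP[/and3P[xy xz yz] _]] ->.
rewrite !mem_s in Axy Ayz Azx; rewrite /= orbF.
have neq : [/\ x != y, y != z & z != x].
  by rewrite yz -!val_eqE (ltn_eqF xy) (gtn_eqF xz).
exact: no_rainbow_triangle_pairs norb neq Axy Ayz Azx.
Qed.

Lemma complete_of_arcs_colors_18 :
  ~ has_rainbow_triangle A C ->
  num_arcs A + num_colors A C = 18 -> forall i j, A i j = (i != j).
Proof.
move=> norb arcs_colors.
have num_arcsE : num_arcs A = size s.
  by rewrite /num_arcs cardE (perm_size perm_enum_arcs_offdiag4).
pose col (p : 'I_4 * 'I_4) := C p.1 p.2.
have num_colorsE : num_colors A C = size (undup (map col s)).
  by rewrite /num_colors (perm_size (perm_undup (perm_mem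
    (perm_map col perm_enum_arcs_offdiag4)))).
have /orP[/eqP|/allP bound] := allP arcs_color_bound_all s (filter_sublists _ _).
  exact: complete_of_size_arcs.
have [r r_choice r_col] := triangle_constraints_color norb.
have := bound r r_choice; rewrite -num_arcsE -arcs_colors ltn_add2l ltnNge.
by rewrite num_colorsE (size_undup_map_unify (c := col)).
Qed.

End DigraphOnI4.

Theorem lemma4 (V : finType) (A : rel V) (C : V -> V -> nat) :
  #|V| = 4 -> loopless A ->
  num_arcs A + num_colors A C = 18 ->
  ~ has_rainbow_triangle A C ->
  digraph_iso A K4_arcs.
Proof.
move=> cardV loopA arcs_colors norb.
pose g (i : 'I_4) : V := enum_val (cast_ord (esym cardV) i).
have g_bij : bijective g.
  exists (fun v => cast_ord cardV (enum_rank v)) => [i | v].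
    by rewrite /g enum_valK cast_ordKV.
  by rewrite /g cast_ordK enum_rankK.
apply: (digraph_iso_relpre g_bij); exists id; split; first by exists id.
apply: (complete_of_arcs_colors_18 (C := fun i j => C (g i) (g j))).
- by move=> i; apply: loopA.
- by move/(rainbow_triangle_relpre g_bij).
- by rewrite num_arcs_relpre ?num_colors_relpre.
Qed.
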